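(* For any $n\in\mathbb{N}, l\in\mathbb{Z}, Q\in\mathbb{C}[K^{\pm1},C_1]$, we have $u(n,l,Q)=q^{2nl}K_2^{l}g^nQv_\eta$, where $$g=F_2(1-q^{-2}K_2^{2}K^{-2})+\alpha(1-q^{-2})F_3K^{-1}.$$
   Context: Let $q\in\mathbb{C}$ be nonzero and not a root of unity, and $U=U_q(\mathfrak{sl}_3)$ the algebra generated by $E_1,E_2,F_1,F_2,K_1^{\pm1},K_2^{\pm1}$ with the Jimbo relations. Put $F_3=F_1F_2-qF_2F_1$, $K=K_1K_2^2$, $C_1=F_1E_1+\frac{qK_1+q^{-1}K_1^{-1}}{(q-q^{-1})^2}$. Let $U^+$ be the subalgebra generated by $E_1,E_2$, $\eta:U^+\to\mathbb{C}$ the algebra homomorphism with $\eta(E_1)=\alpha\neq0$, $\eta(E_2)=0$, and $M(\eta)=U\otimes_{U^+}\mathbb{C}v_\eta$ with $xv_\eta=\eta(x)v_\eta$. Write $[k]=\frac{q^k-q^{-k}}{q-q^{-1}}$, $[k]!=[k]\cdots[1]$, $[0]!=1$, $\genfrac{[}{]}{0pt}{}{n}{k}=\frac{[n]!}{[k]![n-k]!}$ for $0\le k\le n$ (0 otherwise). For $n\in\mathbb{Z}_+$, $l\in\mathbb{Z}$, $Q\in\mathbb{C}[K^{\pm1},C_1]$, $u(n,l,Q)=q^{2nl}K_2^l\sum_{k=0}^{n}\sum_{j=0}^{n-k}a_{kj}(n)F_2^{n-k}F_3^kK_2^{2j}K^{-2j-k}Qv_\eta$ with $a_{kj}(n)=(-1)^j\alpha^k(q^2-1)^kq^{j(n-3)}q^{\frac{1}{2}k(2n+2j+k-7)}\genfrac{[}{]}{0pt}{}{n}{k}\genfrac{[}{]}{0pt}{}{n-k}{j}$.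 *)

From HB Require Import structures.
From mathcomp Require Import all_boot all_algebra.
From mathcomp Require Import reals complex.
Set Implicit Arguments.
Unset Strict Implicit.
Unset Printing Implicit Defensive.
Import GRing.Theory Num.Theory.
Local Open Scope ring_scope.

(* A representation of U_q(sl_3) (Jimbo presentation) on a C-vector space V:
   linear operators E1 E2 F1 F2 K1 K2 K1i K2i (Ki = K_i^{-1}) satisfying
   the defining relations, with Cartan matrix [[2,-1],[-1,2]]. *)
Record Uq_sl3_rep (R : realType) (q : R[i]) (V : lmodType R[i]) := {
  E1 : {linear V -> V}; E2 : {linear V -> V};
  F1 : {linear V -> V}; F2 : {linear V -> V};
  K1 : {linear V -> V}; K2 : {linear V -> V};
  K1i : {linear V -> V}; K2i : {linear V -> V};
  rK12 : forall x, K1 (K2 x) = K2 (K1 x);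
  rK1K1i : forall x, K1 (K1i x) = x; rK1iK1 : forall x, K1i (K1 x) = x;
  rK2K2i : forall x, K2 (K2i x) = x; rK2iK2 : forall x, K2i (K2 x) = x;
  (* K_i E_j K_i^{-1} = q^{a_ij} E_j *)
  rK1E1 : forall x, K1 (E1 (K1i x)) = q ^+ 2 *: E1 x;
  rK1E2 : forall x, K1 (E2 (K1i x)) = q^-1 *: E2 x;
  rK2E1 : forall x, K2 (E1 (K2i x)) = q^-1 *: E1 x;
  rK2E2 : forall x, K2 (E2 (K2i x)) = q ^+ 2 *: E2 x;
  (* K_i F_j K_i^{-1} = q^{-a_ij} F_j *)
  rK1F1 : forall x, K1 (F1 (K1i x)) = q ^- 2 *: F1 x;
  rK1F2 : forall x, K1 (F2 (K1i x)) = q *: F2 x;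
  rK2F1 : forall x, K2 (F1 (K2i x)) = q *: F1 x;
  rK2F2 : forall x, K2 (F2 (K2i x)) = q ^- 2 *: F2 x;
  rEF11 : forall x, E1 (F1 x) - F1 (E1 x) = (q - q^-1)^-1 *: (K1 x - K1i x);
  rEF22 : forall x, E2 (F2 x) - F2 (E2 x) = (q - q^-1)^-1 *: (K2 x - K2i x);
  rEF12 : forall x, E1 (F2 x) = F2 (E1 x);
  rEF21 : forall x, E2 (F1 x) = F1 (E2 x);
  rSE12 : forall x, E1 (E1 (E2 x)) - (q + q^-1) *: E1 (E2 (E1 x)) + E2 (E1 (E1 x)) = 0;
  rSE21 : forall x, E2 (E2 (E1 x)) - (q + q^-1) *: E2 (E1 (E2 x)) + E1 (E2 (E2 x)) = 0;
  rSF12 : forall x, F1 (F1 (F2 x)) - (q + q^-1) *: F1 (F2 (F1 x)) + F2 (F1 (F1 x)) = 0;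
  rSF21 : forall x, F2 (F2 (F1 x)) - (q + q^-1) *: F2 (F1 (F2 x)) + F1 (F2 (F2 x)) = 0
}.

Section Ops.
Variables (R : realType) (q : R[i]) (V : lmodType R[i]) (M : Uq_sl3_rep q V).

Definition opz (f fi : V -> V) (l : int) : V -> V :=
  match l with Posz m => iter m f | Negz m => iter m.+1 fi end.

Definition F3op (x : V) : V := F1 M (F2 M x) - q *: F2 M (F1 M x).
Definition Kop (x : V) : V := K1 M (K2 M (K2 M x)).
Definition Kiop (x : V) : V := K1i M (K2i M (K2i M x)).
Definition C1op (x : V) : V :=
  F1 M (E1 M x) + ((q - q^-1) ^+ 2)^-1 *: (q *: K1 M x + q^-1 *: K1i M x).
(* Q = sum_t c_t K^{a_t} C_1^{b_t}, an arbitrary element of C[K^{+-1}, C_1],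
   encoded by the finite list of its terms (c_t, a_t, b_t). *)
Definition Qop (s : seq (R[i] * int * nat)) (x : V) : V :=
  \sum_(t <- s) t.1.1 *: opz Kop Kiop t.1.2 (iter t.2 C1op x).

Definition gop (alpha : R[i]) (x : V) : V :=
  F2 M (x - q ^- 2 *: K2 M (K2 M (Kiop (Kiop x))))
  + (alpha * (1 - q ^- 2)) *: F3op (Kiop x).
End Ops.

Definition qint (R : realType) (q : R[i]) (k : nat) : R[i] :=
  (q ^+ k - q ^- k) / (q - q^-1).
Definition qfact (R : realType) (q : R[i]) (k : nat) : R[i] :=
  \prod_(1 <= i < k.+1) qint q i.
Definition qbinom (R : realType) (q : R[i]) (n k : nat) : R[i] :=
  if (k <= n)%N then qfact q n / (qfact q k * qfact q (n - k)) else 0.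

(* a_{kj}(n); the exponent k(2n+2j+k-7)/2 is always an integer
   (k(k-7) is even), computed with exact integer division. *)
Definition acoef (R : realType) (q alpha : R[i]) (n k j : nat) : R[i] :=
  (-1) ^+ j * alpha ^+ k * (q ^+ 2 - 1) ^+ k
  * q ^ (j%:Z * (n%:Z - 3))
  * q ^ ((k%:Z * (2 * n%:Z + 2 * j%:Z + k%:Z - 7)) %/ 2)%Z
  * qbinom q n k * qbinom q (n - k) j.

Definition uvec (R : realType) (q alpha : R[i]) (V : lmodType R[i])
  (M : Uq_sl3_rep q V) (v : V) (n : nat) (l : int) (s : seq (R[i] * int * nat)) : V :=
  q ^ (2 * n%:Z * l) *: opz (K2 M) (K2i M) l
    (\sum_(k < n.+1) \sum_(j < (n - k).+1)
        acoef q alpha n k j *: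
          iter (n - k) (F2 M) (iter k (F3op M) (iter (2 * j) (K2 M)
            (opz (Kop M) (Kiop M) (- (2 * j%:Z + k%:Z)) (Qop M s v))))).

From HB Require Import structures.
From mathcomp Require Import all_boot all_algebra.
From mathcomp Require Import reals complex.
From mathcomp Require Import ring zify.
Import GRing.Theory Num.Theory.
Local Open Scope ring_scope.
Set Implicit Arguments.
Unset Strict Implicit.

(* Put y := q^-2 K_2^2 K^-2 and c := alpha (1 - q^-2), so that
   g = F_2 (1 - y) + c F_3 K^-1.  The operators F_2, F_3, K^-1 and y pairwise
   q-commute (F_3 F_2 = q^-1 F_2 F_3 is the quantum Serre relation), hence
   by induction on n, g^n is the normally ordered sum
     sum_k beta(n,k) F_2^(n-k) F_3^k (1 - q^(2k) y) ... (1 - q^(2n-2) y) K^-k,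
   beta(n,k) = c^k q^(k(2n+k-3)/2) [n choose k]: the two q-Pascal rules are
   exactly what merges the contributions of the two summands of g.  The
   q-binomial theorem expands the product, and y^j = q^-2j K_2^2j K^-2j. *)

Section IterLinear.
Variables (K : pzRingType) (V : lmodType K) (f : {linear V -> V}).

Fact iter_is_linear n : linear (iter n f).
Proof. by elim: n => [|n IH] a u v //=; rewrite IH linearP. Qed.

HB.instance Definition _ n :=
  GRing.isLinear.Build K V V *:%R (iter n f) (iter_is_linear n).

End IterLinear.

Lemma iter_commute (T : Type) (f h : T -> T) n x :
  (forall y, f (h y) = h (f y)) -> f (iter n h x) = iter n h (f x).
Proof. by move=> fh; elim: n => //= n <-. Qed.

Section QCommute.
Variables (K : fieldType) (V : lmodType K).

Definition qcommute (L F : V -> V) (a : K) := forall w, L (F w) = a *: F (L w).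

Lemma qcommute_conj (L Li F : V -> V) a :
  cancel L Li -> (forall w, L (F (Li w)) = a *: F w) -> qcommute L F a.
Proof. by move=> LK LF w; rewrite -LF LK. Qed.

Lemma qcommute_inv (Li : {linear V -> V}) (L F : V -> V) a : a != 0 ->
  cancel L Li -> (forall w, L (F (Li w)) = a *: F w) -> qcommute Li F a^-1.
Proof. by move=> a0 LK LF w; rewrite -[F w](scalerK a0) (linearZZ Li) -LF LK. Qed.

Lemma qcommute_comp (L1 : {linear V -> V}) (L2 F : V -> V) a b :
  qcommute L1 F a -> qcommute L2 F b -> qcommute (L1 \o L2) F (a * b).
Proof. by move=> h1 h2 w /=; rewrite h2 (linearZZ L1) h1 scalerA mulrC. Qed.

Lemma qcommute_scale (L : V -> V) (F : {linear V -> V}) a c :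
  qcommute L F a -> qcommute (fun w => c *: L w) F a.
Proof. by move=> h w /=; rewrite h (linearZZ F) !scalerA mulrC. Qed.

Lemma qcommute_qcommutator (L F G : {linear V -> V}) a b c :
  qcommute L F a -> qcommute L G b ->
  qcommute L (fun w => F (G w) - c *: G (F w)) (a * b).
Proof.
move=> hF hG w; rewrite (linearB L) (linearZZ L) (hF (G w)) (hG w) (hG (F w)) (hF w).
rewrite (linearZZ F) (linearZZ G) scalerBr !scalerA.
by congr (_ - _ *: _); ring.
Qed.

Lemma qcommute_iter (L F : {linear V -> V}) a n :
  qcommute L F a -> qcommute L (iter n F) (a ^+ n).
Proof.
by move=> h w; elim: n => [|n IH] /=; rewrite ?scale1r // h IH (linearZZ F) scalerA exprS.
Qed.

End QCommute.

Lemma big_ord_shift (V : nmodType) n (A B T : nat -> V) :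
  T 0%N = A 0%N -> (forall k, (k < n)%N -> T k.+1 = A k.+1 + B k) -> T n.+1 = B n ->
  \sum_(k < n.+1) (A k + B k) = \sum_(k < n.+2) T k.
Proof.
move=> T0 TS Tn; rewrite big_split /= big_ord_recl big_ord_recr /=.
rewrite [in RHS]big_ord_recl [in RHS]big_ord_recr /= T0 Tn.
under [in RHS]eq_bigr => k _ do rewrite TS //.
by rewrite big_split /= !addrA.
Qed.

Lemma linear_sub_comb (K : pzRingType) (U V : lmodType K) (N : {linear U -> V})
    (b b1 b2 s s1 s2 : K) (u v : U) :
  b = b1 + b2 -> b * s = b1 * s1 + b2 * s2 ->
  b *: N (u - s *: v) = b1 *: N (u - s1 *: v) + b2 *: N (u - s2 *: v).
Proof.
move=> -> bs; rewrite !linearB !(linearZZ N) !scalerBr !scalerA bs.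
by rewrite !scalerDl opprD addrACA.
Qed.

Section QNumbers.
Variables (R : realType) (q : R[i]).
Hypothesis q_neq0 : q != 0.
Hypothesis q_not_root1 : forall m : nat, (0 < m)%N -> q ^+ m != 1.

Lemma qint_neq0 k : (0 < k)%N -> qint q k != 0.
Proof.
have qdiff_neq0 m : (0 < m)%N -> q ^+ m - q ^- m != 0.
  move=> m_gt0; rewrite subr_eq0; apply/eqP => qm_eq.
  have /q_not_root1 : (0 < 2 * m)%N by rewrite muln_gt0.
  by rewrite mulnC exprM expr2 {2}qm_eq mulfV ?expf_neq0 ?eqxx.
have := qdiff_neq0 1%N isT; rewrite expr1 => qdiff1_neq0 k_gt0.
by rewrite mulf_neq0 ?invr_eq0 ?qdiff_neq0.
Qed.

Lemma qfactS k : qfact q k.+1 = qfact q k * qint q k.+1.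
Proof. by rewrite /qfact big_nat_recr. Qed.

Lemma qfact_neq0 k : qfact q k != 0.
Proof.
elim: k => [|k IH]; first by rewrite /qfact big_geq ?oner_neq0.
by rewrite qfactS mulf_neq0 ?qint_neq0.
Qed.

Lemma qbinom_gt n k : (n < k)%N -> qbinom q n k = 0.
Proof. by rewrite /qbinom ltnNge => /negbTE ->. Qed.

Lemma qbinom_n0 n : qbinom q n 0 = 1.
Proof. by rewrite /qbinom subn0 /qfact big_nil mul1r divff ?qfact_neq0. Qed.

Lemma qbinomSS_qint n k :
  qbinom q n.+1 k.+1 * qint q k.+1 = qint q n.+1 * qbinom q n k.
Proof.
rewrite /qbinom ltnS subSS; case: leqP => _; last by rewrite mul0r mulr0.
by rewrite !qfactS; field; rewrite !qfact_neq0 qint_neq0.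
Qed.

Lemma qbinomS_qint n k :
  qbinom q n k.+1 * qint q k.+1 = qint q (n - k) * qbinom q n k.
Proof.
rewrite /qbinom; case: (ltnP k n) => [lt_kn | le_nk].
  rewrite ltnW // -(subnSK lt_kn) !qfactS.
  by field; rewrite !qfact_neq0 !qint_neq0.
by rewrite (eqnP le_nk) /qint !expr0 invr1 subrr !mul0r.
Qed.

Lemma qintD a b : qint q (a + b) = q ^+ b * qint q a + q ^- a * qint q b.
Proof.
rewrite /qint exprD !mulrA -mulrDl; congr (_ * _).
by field; rewrite !expf_neq0.
Qed.

Lemma qbinom_pascal k m : qbinom q (k + m).+1 k.+1 =
  q ^- k.+1 * qbinom q (k + m) k.+1 + q ^+ m * qbinom q (k + m) k.
Proof.
apply: (mulIf (qint_neq0 (ltn0Sn k))).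
rewrite mulrDl -!mulrA qbinomSS_qint qbinomS_qint addKn -addSn qintD.
by ring.
Qed.

Lemma qbinom_pascal' k m : qbinom q (k + m).+1 k.+1 =
  q ^+ k.+1 * qbinom q (k + m) k.+1 + q ^- m * qbinom q (k + m) k.
Proof.
apply: (mulIf (qint_neq0 (ltn0Sn k))).
rewrite mulrDl -!mulrA qbinomSS_qint qbinomS_qint addKn -addSn addnC qintD.
by ring.
Qed.

End QNumbers.

Section NormalOrdering.
Variables (R : realType) (q c : R[i]) (V : lmodType R[i]).
Variables (f2 f3 ki y : {linear V -> V}).
Hypothesis q_neq0 : q != 0.
Hypothesis q_not_root1 : forall m : nat, (0 < m)%N -> q ^+ m != 1.
Hypotheses (y_f2 : qcommute y f2 (q ^+ 2)) (y_f3 : qcommute y f3 (q ^+ 4)).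
Hypotheses (ki_f2 : qcommute ki f2 (q ^+ 3)) (ki_f3 : qcommute ki f3 (q ^+ 3)).
Hypothesis f3_f2 : qcommute f3 f2 q^-1.
Hypothesis ki_y : forall w, ki (y w) = y (ki w).

Definition g w := f2 (w - y w) + c *: f3 (ki w).

Fact g_is_linear : linear g.
Proof.
move=> a u v; rewrite /g.
have -> : a *: u + v - y (a *: u + v) = a *: (u - y u) + (v - y v).
  by rewrite linearP scalerBr opprD addrACA.
by rewrite !linearP scalerDr addrACA.
Qed.

HB.instance Definition _ := GRing.isLinear.Build R[i] V V *:%R g g_is_linear.

Lemma g_mono a b w :
  g (iter a f2 (iter b f3 w)) =
  iter a.+1 f2 (iter b f3 (w - q ^+ (2 * a + 4 * b) *: y w))
  + (c * q ^+ (2 * a + 3 * b)) *: iter a f2 (iter b.+1 f3 (ki w)).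
Proof.
rewrite /g; congr (_ + _).
  rewrite !linearB !linearZ /= (qcommute_iter a y_f2) (qcommute_iter b y_f3).
  by rewrite !linearZ /= scalerA exprD !exprM.
rewrite (qcommute_iter a ki_f2) (qcommute_iter b ki_f3) !linearZ /=.
rewrite (qcommute_iter a f3_f2) !scalerA; congr (_ *: _).
rewrite -!exprM exprVn (_ : (3 * a = a + 2 * a)%N); last by lia.
by rewrite !exprD; field; rewrite expf_neq0.
Qed.

(* [qpoch m r] is the product (1 - r y) (1 - q^2 r y) ... (1 - q^(2m-2) r y). *)
Fixpoint qpoch m r w : V :=
  if m is m'.+1 then qpoch m' (q ^+ 2 * r) (w - r *: y w) else w.

Fact qpoch_is_linear m r : linear (qpoch m r).
Proof.
elim: m r => [|m IH] r a u v //=.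
have -> : a *: u + v - r *: y (a *: u + v) = a *: (u - r *: y u) + (v - r *: y v).
  by rewrite linearP scalerDr scalerBr !scalerA mulrC opprD addrACA.
exact: IH.
Qed.

HB.instance Definition _ m r :=
  GRing.isLinear.Build R[i] V V *:%R (qpoch m r) (qpoch_is_linear m r).

Lemma qpoch_commute (L : {linear V -> V}) :
  (forall u, L (y u) = y (L u)) -> forall m r w, L (qpoch m r w) = qpoch m r (L w).
Proof.
by move=> Ly m; elim: m => //= m IH r w; rewrite IH (linearB L) (linearZZ L) Ly.
Qed.

Lemma qpoch_y m r w : qpoch m r (y w) = y (qpoch m r w).
Proof. by rewrite (@qpoch_commute y). Qed.

Lemma qpochS m r w : qpoch m.+1 r w = qpoch m (q ^+ 2 * r) (w - r *: y w).
Proof. by []. Qed.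

Lemma qpochSr m r w :
  qpoch m.+1 r w = qpoch m r w - (q ^+ (2 * m) * r) *: y (qpoch m r w).
Proof.
elim: m r w => [|m IH] r w; first by rewrite mul1r.
rewrite qpochS IH qpochS; congr (_ - _ *: _).
by rewrite mulrA -exprD; congr (_ ^+ _ * _); lia.
Qed.

Lemma qpochSl m r w :
  qpoch m.+1 r w = qpoch m (q ^+ 2 * r) w - r *: y (qpoch m (q ^+ 2 * r) w).
Proof. by rewrite qpochS linearB linearZ /= qpoch_y. Qed.

(* The q-binomial theorem: y^j occurs in [qpoch m r] with (-r)^j q^(j(m-1)) [m choose j]. *)
Definition qpoch_coef m r j := (- (r / q)) ^+ j * q ^+ (m * j) * qbinom q m j.

Lemma qpoch_coef0 m r : qpoch_coef m r 0 = 1.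
Proof. by rewrite /qpoch_coef muln0 !expr0 qbinom_n0 ?mulr1. Qed.

Lemma qpoch_coefS j d r : qpoch_coef (j + d).+1 r j.+1 =
  qpoch_coef (j + d) r j.+1 - q ^+ (2 * (j + d)) * r * qpoch_coef (j + d) r j.
Proof.
rewrite /qpoch_coef qbinom_pascal // mulSn mulnS (mulnC 2) [q ^+ (_ * 2)]exprM.
by rewrite !exprD !exprS; field; rewrite ?q_neq0 ?expf_neq0.
Qed.

Lemma qpoch_expand m r w :
  qpoch m r w = \sum_(j < m.+1) qpoch_coef m r j *: iter j y w.
Proof.
elim: m => [|m IH]; first by rewrite big_ord1 qpoch_coef0 scale1r.
rewrite qpochSr IH linear_sum scaler_sumr -sumrN -big_split /=.
under eq_bigr => j _ do rewrite (linearZZ y) scalerA.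
apply: (big_ord_shift (A := fun j => qpoch_coef m r j *: iter j y w)
  (B := fun j => - ((q ^+ (2 * m) * r * qpoch_coef m r j) *: iter j.+1 y w))
  (T := fun j => qpoch_coef m.+1 r j *: iter j y w)).
- by rewrite !qpoch_coef0.
- move=> k lt_km; rewrite -(subnKC (ltnW lt_km)) qpoch_coefS.
  by rewrite scalerBl.
- have := qpoch_coefS m 0 r; rewrite addn0 => ->.
  by rewrite [qpoch_coef m r m.+1]/qpoch_coef qbinom_gt // mulr0 sub0r scaleNr.
Qed.

Definition gexp (n k : nat) : int := ((k%:Z * (2 * n%:Z + k%:Z - 3)) %/ 2)%Z.

Lemma gexpS n k : gexp n.+1 k = gexp n k + k%:Z.
Proof.
rewrite /gexp [RHS]addrC -divzMDl //; congr (_ %/ _)%Z.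
by rewrite intS; ring.
Qed.

Lemma gexpSS n k : gexp n.+1 k.+1 = gexp n k + (n + 2 * k)%N%:Z.
Proof.
rewrite /gexp [RHS]addrC -divzMDl //; congr (_ %/ _)%Z.
by rewrite !intS PoszD PoszM; ring.
Qed.

Definition gpow_coef n k := c ^+ k * q ^ gexp n k * qbinom q n k.

Lemma gpow_coef0 n : gpow_coef n 0 = 1.
Proof. by rewrite /gpow_coef /gexp mul0r div0z expr0z qbinom_n0 // expr0 !mulr1. Qed.

Lemma gpow_coefSS k m : gpow_coef (k + m).+1 k.+1 =
  gpow_coef (k + m) k.+1 + c * q ^+ (2 * m + 3 * k) * gpow_coef (k + m) k.
Proof.
rewrite /gpow_coef qbinom_pascal // mulrDr; congr (_ + _).
  by rewrite gexpS expfzDr // -exprnP; field; rewrite ?q_neq0 ?expf_neq0.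
have -> : q ^+ (2 * m + 3 * k) = q ^+ (k + m + 2 * k) * q ^+ m.
  by rewrite -exprD; congr (_ ^+ _); lia.
by rewrite gexpSS expfzDr // -exprnP exprS; ring.
Qed.

Lemma gpow_coefSS' k m : gpow_coef (k + m).+1 k.+1 =
  q ^+ (2 * k.+1) * gpow_coef (k + m) k.+1 + c * q ^+ (3 * k) * gpow_coef (k + m) k.
Proof.
rewrite /gpow_coef qbinom_pascal' // mulrDr; congr (_ + _).
  by rewrite gexpS expfzDr // -exprnP mul2n -addnn exprD; ring.
rewrite gexpSS expfzDr // -exprnP.
have -> : q ^+ (k + m + 2 * k) = q ^+ (3 * k) * q ^+ m.
  by rewrite -exprD; congr (_ ^+ _); lia.
by rewrite exprS; field; rewrite ?q_neq0 ?expf_neq0.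
Qed.

Local Notation gvec n k w := (qpoch (n - k) (q ^+ (2 * k)) (iter k ki w)).

Definition gterm n k w :=
  gpow_coef n k *: iter (n - k) f2 (iter k f3 (gvec n k w)).

Definition gterm_f2 n k w := gpow_coef n k *:
  iter (n - k).+1 f2 (iter k f3 (gvec n k w - q ^+ (2 * (n - k) + 4 * k) *: y (gvec n k w))).

Definition gterm_f3 n k w := (gpow_coef n k * (c * q ^+ (2 * (n - k) + 3 * k))) *:
  iter (n - k) f2 (iter k.+1 f3 (ki (gvec n k w))).

Lemma g_gterm n k w : g (gterm n k w) = gterm_f2 n k w + gterm_f3 n k w.
Proof. by rewrite linearZ /= g_mono scalerDr scalerA. Qed.

Lemma gterm_S0 n w : gterm n.+1 0 w = gterm_f2 n 0 w.
Proof.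
by rewrite /gterm /gterm_f2 !gpow_coef0 !subn0 muln0 !addn0 expr0 qpochSr mulr1.
Qed.

Lemma gterm_Sn n w : gterm n.+1 n.+1 w = gterm_f3 n n w.
Proof.
rewrite /gterm /gterm_f3 !subnn muln0 add0n /=.
have := gpow_coefSS n 0; rewrite addn0 muln0 add0n => ->.
by rewrite [gpow_coef n n.+1]/gpow_coef qbinom_gt // mulr0 add0r mulrC.
Qed.

(* Both summands on the right are combinations of the same two vectors Z and y Z. *)
Lemma gterm_SS n k w : (k < n)%N ->
  gterm n.+1 k.+1 w = gterm_f2 n k.+1 w + gterm_f3 n k w.
Proof.
move=> lt_kn; have [m ->] : exists m, n = (k + m.+1)%N by exists (n - k.+1)%N; lia.
rewrite /gterm /gterm_f2 /gterm_f3.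
have -> : ((k + m.+1).+1 - k.+1 = m.+1)%N by lia.
have -> : ((k + m.+1) - k.+1 = m)%N by lia.
have -> : ((k + m.+1) - k = m.+1)%N by lia.
rewrite qpochSr (qpoch_commute ki_y) qpochSl.
have -> : q ^+ 2 * q ^+ (2 * k) = q ^+ (2 * k.+1) by rewrite -exprD mulnS.
rewrite -[ki (iter k ki w)]iterS.
apply: (linear_sub_comb (iter m.+1 f2 \o iter k.+1 f3)).
  by rewrite gpow_coefSS [_ * gpow_coef _ _]mulrC.
rewrite gpow_coefSS'.
have -> : q ^+ (2 * k.+1) = q ^+ (2 * k) * q ^+ 2.
  by rewrite -exprD; congr (_ ^+ _); lia.
have -> : q ^+ (2 * m + 4 * k.+1) = q ^+ (2 * m) * (q ^+ (2 * k) * q ^+ (2 * k)) * q ^+ 4.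
  by rewrite -!exprD; congr (_ ^+ _); lia.
have -> : q ^+ (2 * m.+1 + 3 * k) = q ^+ (3 * k) * q ^+ (2 * m) * q ^+ 2.
  by rewrite -!exprD; congr (_ ^+ _); lia.
by ring.
Qed.

Lemma iter_g n w : iter n g w = \sum_(k < n.+1) gterm n k w.
Proof.
elim: n => [|n IH]; first by rewrite big_ord1 /gterm gpow_coef0 scale1r.
rewrite iterS IH linear_sum /=; under eq_bigr => k _ do rewrite g_gterm.
apply: (big_ord_shift (A := fun k => gterm_f2 n k w) (B := fun k => gterm_f3 n k w)
  (T := fun k => gterm n.+1 k w)).
- exact: gterm_S0.
- by move=> k; apply: gterm_SS.
- exact: gterm_Sn.
Qed.

Theorem iter_g_expand n w :
  iter n g w = \sum_(k < n.+1) \sum_(j < (n - k).+1)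
    (gpow_coef n k * qpoch_coef (n - k) (q ^+ (2 * k)) j) *:
      iter (n - k) f2 (iter k f3 (iter j y (iter k ki w))).
Proof.
rewrite iter_g; apply: eq_bigr => k _.
rewrite /gterm qpoch_expand !linear_sum /=; apply: eq_bigr => j _.
by rewrite !linearZ /= scalerA mulrC.
Qed.

End NormalOrdering.

Section Representation.
Variables (R : realType) (q : R[i]) (V : lmodType R[i]) (M : Uq_sl3_rep q V).
Hypothesis q_neq0 : q != 0.

Local Notation F1 := (F1 M). Local Notation F2 := (F2 M).
Local Notation K2 := (K2 M). Local Notation K1i := (K1i M). Local Notation K2i := (K2i M).
Local Notation F3 := (F3op M). Local Notation Ki := (Kiop M).

Fact Kiop_is_linear : linear Ki.
Proof. by move=> a u v; rewrite /Kiop !linearP. Qed.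

HB.instance Definition _ := GRing.isLinear.Build R[i] V V *:%R Ki Kiop_is_linear.

Fact F3op_is_linear : linear F3.
Proof.
by move=> a u v; rewrite /F3op !linearP /= scalerN scalerBr addrACA.
Qed.

HB.instance Definition _ := GRing.isLinear.Build R[i] V V *:%R F3 F3op_is_linear.

Definition Yop w := q ^- 2 *: K2 (K2 (Ki (Ki w))).

Fact Yop_is_linear : linear Yop.
Proof. by move=> a u v; rewrite /Yop !linearP. Qed.

HB.instance Definition _ := GRing.isLinear.Build R[i] V V *:%R Yop Yop_is_linear.

Lemma K1i_F1 : qcommute K1i F1 (q ^+ 2).
Proof.
rewrite -[q ^+ 2]invrK; apply: qcommute_inv (rK1iK1 M) (rK1F1 M).
by rewrite invr_eq0 expf_neq0.
Qed.

Lemma K1i_F2 : qcommute K1i F2 q^-1.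
Proof. exact: qcommute_inv q_neq0 (rK1iK1 M) (rK1F2 M). Qed.

Lemma K2i_F1 : qcommute K2i F1 q^-1.
Proof. exact: qcommute_inv q_neq0 (rK2iK2 M) (rK2F1 M). Qed.

Lemma K2i_F2 : qcommute K2i F2 (q ^+ 2).
Proof.
rewrite -[q ^+ 2]invrK; apply: qcommute_inv (rK2iK2 M) (rK2F2 M).
by rewrite invr_eq0 expf_neq0.
Qed.

Lemma K2_F1 : qcommute K2 F1 q.
Proof. exact: qcommute_conj (rK2iK2 M) (rK2F1 M). Qed.

Lemma K2_F2 : qcommute K2 F2 (q ^- 2).
Proof. exact: qcommute_conj (rK2iK2 M) (rK2F2 M). Qed.

Lemma Ki_F1 : qcommute Ki F1 1.
Proof.
have := qcommute_comp K1i_F1 (qcommute_comp K2i_F1 K2i_F1).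
by rewrite (_ : _ * _ = 1) //; field.
Qed.

Lemma Ki_F2 : qcommute Ki F2 (q ^+ 3).
Proof.
have := qcommute_comp K1i_F2 (qcommute_comp K2i_F2 K2i_F2).
by rewrite (_ : _ * _ = q ^+ 3) //; field.
Qed.

Lemma Ki_F3 : qcommute Ki F3 (q ^+ 3).
Proof. by have := qcommute_qcommutator q Ki_F1 Ki_F2; rewrite mul1r. Qed.

Lemma K2_F3 : qcommute K2 F3 q^-1.
Proof.
have := qcommute_qcommutator q K2_F1 K2_F2.
by rewrite (_ : _ * _ = q^-1) //; field.
Qed.

Lemma F3_F2 : qcommute F3 F2 q^-1.
Proof.
move=> x; apply/eqP; rewrite -subr_eq0 -(rSF21 M x) /F3op.
rewrite (linearB F2) (linearZZ F2) scalerBr scalerA mulVf // scale1r scalerDl.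
apply/eqP; rewrite opprB opprD addrA [RHS]addrC !addrA addrAC.
by rewrite addrAC [X in X - _ = _]addrAC.
Qed.

Lemma Y_F2 : qcommute Yop F2 (q ^+ 2).
Proof.
have := qcommute_scale (q ^- 2)
  (qcommute_comp K2_F2 (qcommute_comp K2_F2 (qcommute_comp Ki_F2 Ki_F2))).
by rewrite (_ : _ * _ = q ^+ 2) //; field.
Qed.

Lemma Y_F3 : qcommute Yop F3 (q ^+ 4).
Proof.
have := qcommute_scale (q ^- 2)
  (qcommute_comp K2_F3 (qcommute_comp K2_F3 (qcommute_comp Ki_F3 Ki_F3))).
by rewrite (_ : _ * _ = q ^+ 4) //; field.
Qed.

Lemma K2_K1i x : K2 (K1i x) = K1i (K2 x).
Proof. by rewrite -[LHS](rK1iK1 M) rK12 rK1K1i. Qed.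

Lemma K2_Ki x : K2 (Ki x) = Ki (K2 x).
Proof. by rewrite /Kiop K2_K1i !rK2K2i !rK2iK2. Qed.

Lemma Ki_Y x : Ki (Yop x) = Yop (Ki x).
Proof. by rewrite /Yop (linearZZ Ki) /= -!K2_Ki. Qed.

Lemma iter_Y j w :
  iter j Yop w = (q ^- 2) ^+ j *: iter (2 * j) K2 (iter (2 * j) Ki w).
Proof.
elim: j => [|j IH]; first by rewrite scale1r.
rewrite iterS IH mulnS /Yop !linearZ /= scalerA -exprSr.
by rewrite !(iter_commute _ _ (fun x => esym (K2_Ki x))).
Qed.

End Representation.

Lemma acoef_factor (R : realType) (q alpha : R[i]) n k j : q != 0 -> (k <= n)%N ->
  acoef q alpha n k j = gpow_coef q (alpha * (1 - q ^- 2)) n k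
    * qpoch_coef q (n - k) (q ^+ (2 * k)) j * (q ^- 2) ^+ j.
Proof.
move=> q_neq0 /subnKC <-; move: (n - k)%N => m.
rewrite /acoef /gpow_coef /qpoch_coef /gexp addKn.
have -> : ((k%:Z * (2 * (k + m)%N%:Z + 2 * j%:Z + k%:Z - 7)) %/ 2)%Z =
    (k * j)%N%:Z - (2 * k)%N%:Z + ((k%:Z * (2 * (k + m)%N%:Z + k%:Z - 3)) %/ 2)%Z.
  by rewrite -divzMDl //; congr (_ %/ _)%Z; rewrite !PoszM PoszD; ring.
have -> : j%:Z * ((k + m)%N%:Z - 3) = (k * j)%N%:Z + (m * j)%N%:Z - (3 * j)%N%:Z.
  by rewrite !PoszM PoszD; ring.
rewrite !expfzDr ?expf_neq0 // -!exprnN -!exprnP.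
have -> : 1 - q ^- 2 = (q ^+ 2 - 1) * q ^- 2 by field.
have -> : (- (q ^+ (2 * k) / q)) ^+ j = (-1) ^+ j * (q ^+ (k * j)) ^+ 2 / q ^+ j.
  by rewrite [LHS]exprNn exprMn exprVn -!exprM mulrA; congr (_ * _ ^+ _ / _); lia.
rewrite !exprMn !exprVn -!exprM !(mulnC 2) !(mulnC 3) !exprM.
by field; rewrite ?q_neq0 ?expf_neq0.
Qed.

Lemma opzN (R : realType) (V : lmodType R[i]) (f fi : V -> V) m :
  opz f fi (- m%:Z) = iter m fi.
Proof. by case: m. Qed.

Theorem corollary5p9 (R : realType) (q alpha : R[i])
  (hq0 : q != 0) (hq : forall m : nat, (0 < m)%N -> q ^+ m != 1)
  (halpha : alpha != 0)
  (V : lmodType R[i]) (M : Uq_sl3_rep q V) (v : V)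
  (hE1 : E1 M v = alpha *: v) (hE2 : E2 M v = 0)
  (n : nat) (l : int) (s : seq (R[i] * int * nat)) :
  @uvec R q alpha V M v n l s =
  q ^ (2 * n%:Z * l) *: opz (K2 M) (K2i M) l (iter n (gop M alpha) (Qop M s v)).
Proof.
rewrite /uvec; congr (_ *: opz _ _ _ _).
rewrite (iter_g_expand (alpha * (1 - q ^- 2)) hq0 hq (Y_F2 M hq0) (Y_F3 M hq0)
  (Ki_F2 M hq0) (Ki_F3 M hq0) (F3_F2 M hq0) (Ki_Y M)).
apply: eq_bigr => k _; apply: eq_bigr => j _.
rewrite (acoef_factor _ _ hq0 (leq_ord k)) iter_Y !linearZ /= scalerA.
by rewrite -PoszM -PoszD opzN iterD mulrC.
Qed.
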